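(* For every $t\in(0,1)$, $$\lim_{n \to \infty} \sum_{k \ge 0} B^{n-k}_k(t) = \frac{1}{1+t}.$$
   Context: The Bernstein polynomials are $B^m_k(t) = \binom{m}{k} t^k (1-t)^{m-k}$ for integers $0\le k\le m$, and $B^m_k(t)=0$ for $m<k$ (so only terms with $0\le k\le n/2$ contribute). *)

From mathcomp Require Import all_boot all_order all_algebra.
From mathcomp Require Import all_classical all_reals all_analysis.
Set Implicit Arguments. Unset Strict Implicit. Unset Printing Implicit Defensive.
Import Order.TTheory GRing.Theory Num.Theory.
Local Open Scope ring_scope.

Definition bernstein (R : realType) (m k : nat) (t : R) : R :=
  if (k <= m)%N then 'C(m, k)%:R * t ^+ k * (1 - t) ^+ (m - k) else 0.

(* Pascal's rule for Bernstein polynomials gives the diagonal sums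
   s_n = \sum_k B^(n-k)_k(t) the recurrence s_(n+2) = (1-t) s_(n+1) + t s_n,
   whose characteristic roots are 1 and -t.  With s_0 = 1 and s_1 = 1 - t^2
   this yields (1 + t) s_n = 1 - (-t)^(n+1), and (-t)^n vanishes for |t| < 1. *)
From mathcomp Require Import all_boot all_order all_algebra.
From mathcomp Require Import all_classical all_reals all_analysis.
From mathcomp Require Import ring lra zify.
Set Implicit Arguments. Unset Strict Implicit. Unset Printing Implicit Defensive.
Import Order.TTheory GRing.Theory Num.Theory numFieldNormedType.Exports.
Local Open Scope classical_set_scope.
Local Open Scope ring_scope.

Section BernsteinDiagonal.
Variables (R : realType) (t : R).
Local Notation B m k := (bernstein m k t).

Lemma bernstein_eq0 m k : (m < k)%N -> B m k = 0.
Proof. by move=> ltmk; rewrite /bernstein leqNgt ltmk. Qed.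

Lemma bernsteinS0 m : B m.+1 0 = (1 - t) * B m 0.
Proof. by rewrite /bernstein !bin0 !subn0 !mul1r exprS. Qed.

Lemma bernsteinSS m k : B m.+1 k.+1 = (1 - t) * B m k.+1 + t * B m k.
Proof.
rewrite /bernstein ltnS; case: (ltngtP k m) => [ltkm|ltmk|->].
- rewrite binS natrD subSS -(subnSK ltkm) !exprS; ring.
- by rewrite !mulr0 addr0.
- by rewrite !subnn !binn exprS; ring.
Qed.

(* Truncated subtraction makes both sides vanish when n < j. *)
Lemma bernstein_subSS n j :
  B (n.+1 - j) j.+1 = (1 - t) * B (n - j) j.+1 + t * B (n - j) j.
Proof.
case: (leqP j n) => [lejn|ltnj]; first by rewrite subSn // bernsteinSS.
have [-> ->] : (n.+1 - j = 0)%N /\ (n - j = 0)%N by split; lia.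
by rewrite !bernstein_eq0 ?mulr0 ?addr0 //; apply: leq_ltn_trans ltnj.
Qed.

Definition bernstein_diag n := \sum_(k < n.+1) B (n - k) k.

Lemma bernstein_diagSS n :
  bernstein_diag n.+2 = (1 - t) * bernstein_diag n.+1 + t * bernstein_diag n.
Proof.
have drop_last m : \sum_(j < m.+2) B (m - j) j.+1 = \sum_(j < m.+1) B (m - j) j.+1.
  by rewrite big_ord_recr /= bernstein_eq0 ?addr0 //; lia.
have diag_shift :
    \sum_(k < n.+2) B (n.+1 - k) k = B n.+1 0 + \sum_(j < n.+1) B (n - j) j.+1.
  by rewrite big_ord_recl subn0.
have diag_pad : \sum_(j < n.+2) B (n - j) j = \sum_(k < n.+1) B (n - k) k.
  by rewrite big_ord_recr /= bernstein_eq0 ?addr0 //; lia.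
rewrite /bernstein_diag big_ord_recl subn0 bernsteinS0.
under eq_bigr => j _ do rewrite /= /bump /= add1n subSS bernstein_subSS.
rewrite big_split /= -!mulr_sumr drop_last diag_pad diag_shift.
ring.
Qed.

Lemma bernstein_diag_closed n : (1 + t) * bernstein_diag n = 1 - (- t) ^+ n.+1.
Proof.
elim/ltn_ind: n => -[|[|n]] IH.
- by rewrite /bernstein_diag big_ord1 /bernstein bin0 !expr0 !mulr1 expr1 opprK.
- rewrite /bernstein_diag big_ord_recr big_ord1 /bernstein /= bin0 expr0 expr1.
  by rewrite sqrrN addr0 !mul1r; ring.
- by rewrite bernstein_diagSS mulrDr (mulrCA _ (1 - t)) (mulrCA _ t) !IH // !exprS; ring.
Qed.

Lemma cvg_bernstein_diag : `|t| < 1 -> bernstein_diag @ \oo --> (1 + t)^-1.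
Proof.
move=> t_lt1; have t1_neq0 : 1 + t != 0.
  by move: t_lt1; rewrite ltr_norml => /andP[? _]; rewrite gt_eqF //; lra.
have closed_form : bernstein_diag = fun n => (1 - (- t) ^+ n.+1) / (1 + t).
  by apply: funext => n; rewrite -bernstein_diag_closed mulrC mulKf.
have pow_cvg0 : (fun n => (- t) ^+ n.+1) @ \oo --> 0.
  by rewrite (cvg_shiftS (fun n => (- t) ^+ n)); apply: cvg_expr; rewrite normrN.
have lim_closed_form :
    (fun n => (1 - (- t) ^+ n.+1) / (1 + t)) @ \oo --> (1 - 0) / (1 + t).
  by apply: cvgM; [apply: cvgB; [exact: cvg_cst | exact: pow_cvg0] | exact: cvg_cst].
by rewrite closed_form; rewrite subr0 mul1r in lim_closed_form.
Qed.

End BernsteinDiagonal.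

Theorem mainTheorem8 (R : realType) (t : R) (ht0 : 0 < t) (ht1 : t < 1) :
  (fun n : nat => \sum_(0 <= k < n.+1) bernstein (n - k) k t) @ \oo --> ((1 + t)^-1 : R).
Proof.
have -> : (fun n => \sum_(0 <= k < n.+1) bernstein (n - k) k t) = bernstein_diag t.
  by apply: funext => n; rewrite big_mkord.
by apply: cvg_bernstein_diag; rewrite gtr0_norm.
Qed.
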